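(* Let $P$ be an optimal planning problem that has a feasible solution and whose optimal cost $C^*$ is attained. Let $A$ be a well-behaved randomized feasible planner. Consider Asymptotically-optimal$(P,A,n)$: run $A$ on $P_\infty$ to obtain $y_0$ and set $c_0=C(y_0)$; for $i=1,\dots,n$ run $A$ on $P_{c_{i-1}}$ to obtain $y_i$ and set $c_i=C(y_i)$; return $y_n$. Then this procedure is asymptotically optimal: for every $\epsilon>0$, $\Pr\big(C(y_n)-C^*\ge\epsilon\big)\to 0$ as $n\to\infty$, and $C(y_n)\to C^*$ with probability 1.
   Context: A feasible kinodynamic planning problem asks for $S\ge0$, $y:[0,S]\to X$, $u:[0,S]\to U$ with $y(0)=x_I$, $y(S)\in G$, $y(s)\in F$, $u(s)\in B(y(s))$, $y'(s)=D(y(s),u(s))$ for all $s$. An optimal planning problem $P$ also specifies an incremental cost $L$ and terminal cost $\Phi$ and minimizes $C(y)=\int_0^S L(y(s),u(s))ds+\Phi(y(S))$ over feasible solutions, with minimum $C^*$. For $\bar c\in\mathbb{R}\cup\{\infty\}$, $P_{\bar c}$ is the feasible kinodynamic problem (in state-cost space, with augmented state $(x,c)$, start $(x_I,0)$, dynamics $x'=D(x,u)$, $c'=L(x,u)$, goal $\{(x,c):x\in G,\ c+\Phi(x)\le\bar c\}$) whose solutions are exactly the feasible trajectories of $P$ with $C(y)\le\bar c$. A randomized planner $A$, run on $P_{\bar c}$, returns a random solution $y$. $A$ is well-behaved if (1) whenever a feasible solution exists and $\bar c>C^*$, $A$ on $P_{\bar c}$ terminates in finite time; and (2) there is a constant $w>0$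 such that for every cost bound $\bar c$, the returned solution satisfies $E\big[C(y)-C^*\mid\bar c\big]\le(1-w)(\bar c-C^* )$. *)

From HB Require Import structures.
From mathcomp Require Import all_boot all_order all_algebra.
From mathcomp Require Import all_classical all_reals all_analysis measurable_realfun.
Set Implicit Arguments. Unset Strict Implicit. Unset Printing Implicit Defensive.
Import Order.TTheory GRing.Theory Num.Theory.
Import numFieldNormedType.Exports.
Local Open Scope classical_set_scope.
Local Open Scope ring_scope.

(** An optimal kinodynamic planning problem: state space X, control set U,
    start xI, goal G, free space F, admissible controls B, dynamics D,
    incremental cost L and terminal cost Phi. *)
Record planning_problem (R : realType) (X : normedModType R) (U : Type) := PlanningProblem {
  pp_xI : X;
  pp_G : set X;
  pp_F : set X;
  pp_B : X -> set U;
  pp_D : X -> U -> X;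
  pp_L : X -> U -> R;
  pp_Phi : X -> R }.

Record traj (R : realType) (X : normedModType R) (U : Type) := Traj {
  t_S : R;
  t_y : R -> X;
  t_u : R -> U }.

(** Feasibility: S >= 0, y(0)=xI, y(S) in G, and for all s in [0,S]:
    y(s) in F, u(s) in B(y(s)), and y'(s) = D(y(s),u(s)), where the
    derivative is taken within [0,S] (one-sided at the endpoints). *)
Definition feasible (R : realType) (X : normedModType R) (U : Type)
  (P : planning_problem X U) (t : traj X U) : Prop :=
  [/\ 0 <= t_S t, t_y t 0 = pp_xI P, pp_G P (t_y t (t_S t)) &
   forall s, s \in `[0, t_S t] ->
     [/\ pp_F P (t_y t s), pp_B P (t_y t s) (t_u t s) &
      (fun h : R => h^-1 *: (t_y t (s + h) - t_y t s))
        @ within [set h : R | 0 <= s + h <= t_S t] (nbhs (0 : R)^')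
        --> pp_D P (t_y t s) (t_u t s)]].

Definition cost (R : realType) (X : normedModType R) (U : Type)
  (P : planning_problem X U) (t : traj X U) : R :=
  Rintegral (@lebesgue_measure R) `[0, t_S t] (fun s => pp_L P (t_y t s) (t_u t s))
  + pp_Phi P (t_y t (t_S t)).

Definition optimal_cost_attained (R : realType) (X : normedModType R) (U : Type)
  (P : planning_problem X U) (Cstar : R) : Prop :=
  (exists t, feasible P t /\ cost P t = Cstar) /\
  (forall t, feasible P t -> Cstar <= cost P t).

Definition solves_bounded (R : realType) (X : normedModType R) (U : Type)
  (P : planning_problem X U) (cbar : \bar R) (t : traj X U) : Prop :=
  feasible P t /\ ((cost P t)%:E <= cbar)%E.

(** A randomized planner is modelled as a map A : \bar R -> Sd -> traj,
    where Sd is a space of random seeds distributed according to the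
    probability mu: A cbar s is the solution returned on P_cbar with seed s.
    It is well-behaved with constant w if
    (1) whenever cbar >= Cstar (so P_cbar has a solution), A returns a solution
        of P_cbar (termination);
    (2) for every finite cbar >= Cstar, E[C(y) - Cstar | cbar] <= (1-w)(cbar - Cstar)
        (for cbar = +oo the right-hand side is +oo). *)
Definition well_behaved (R : realType) (X : normedModType R) (U : Type)
  (P : planning_problem X U) (Cstar : R)
  (d : measure_display) (Sd : measurableType d) (mu : probability Sd R)
  (A : \bar R -> Sd -> traj X U) (w : R) : Prop :=
  [/\ 0 < w,
      (forall cbar : \bar R, (Cstar%:E <= cbar)%E -> forall s, solves_bounded P cbar (A cbar s)) &
      (forall cbar : R, Cstar <= cbar ->
         (\int[mu]_s ((cost P (A cbar%:E s) - Cstar)%:E) <= ((1 - w) * (cbar - Cstar))%:E)%E)].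

Definition iid_seeds (R : realType) (d : measure_display) (Omega : measurableType d)
  (Pr : probability Omega R) (d' : measure_display) (Sd : measurableType d')
  (mu : probability Sd R) (omega : nat -> Omega -> Sd) : Prop :=
  (forall n, measurable_fun setT (omega n)) /\
  forall (I : seq nat) (Bs : nat -> set Sd), uniq I -> (forall i, measurable (Bs i)) ->
    Pr (\bigcap_(i in [set` I]) (omega i @^-1` Bs i)) = (\prod_(i <- I) mu (Bs i))%E.

Fixpoint asymp_opt (R : realType) (X : normedModType R) (U : Type)
  (P : planning_problem X U) (T Sd : Type) (A : \bar R -> Sd -> traj X U)
  (omega : nat -> T -> Sd) (n : nat) (x : T) : traj X U :=
  match n with
  | 0 => A +oo%E (omega 0%N x)
  | n'.+1 => A (cost P (asymp_opt P A omega n' x))%:E (omega n x)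
  end.

From HB Require Import structures.
From mathcomp Require Import all_boot all_order all_algebra.
From mathcomp Require Import all_classical all_reals all_analysis measurable_realfun.
Import Order.TTheory GRing.Theory Num.Theory.
Import numFieldNormedType.Exports.
Local Open Scope classical_set_scope.
Local Open Scope ring_scope.

(* Each call of the planner returns a solution whose cost is at most the current
   bound, so the costs c_n of Asymptotically-optimal are nonincreasing and bounded
   below by C*.  Moreover c_(n+1) is a measurable function of c_n and of the fresh
   seed omega_(n+1), which is independent of c_n (a Dynkin-class argument), so by
   Tonelli and well-behavedness E[c_(n+1) - C*] <= (1 - w) E[c_n - C*].  Since c_0
   need not be integrable, this geometric decay is applied to the chain started at
   min(c_0, C* + M), which coincides with (c_n) on {c_0 <= C* + M}; with Markov's
   inequality, Pr(c_n - C* >= eps) <= Pr(c_0 > C* + M) + (1 - w)^n M / eps.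
   Letting n and then M tend to infinity, {c_n - C* >= eps for all n} is null, and
   monotonicity turns this into convergence in probability and almost surely. *)

Lemma measurable_preimage {d d'} {T : measurableType d} {T' : measurableType d'}
    {f : T -> T'} {B : set T'} :
  measurable_fun setT f -> measurable B -> measurable (f @^-1` B).
Proof. by move=> mf mB; rewrite -[_ @^-1` _]setTI; exact: mf. Qed.

Lemma measurable_set_ltr {d} {T : measurableType d} {R : realType} (f g : T -> R) :
  measurable_fun setT f -> measurable_fun setT g -> measurable [set x | f x < g x].
Proof.
move=> mf mg; rewrite -[X in measurable X]setTI.
exact: (measurable_fun_ltr mf mg measurableT (Y := [set true]) I).
Qed.

Section independence_extension.
Context {R : realType} {dO : measure_display} {Omega : measurableType dO}
  (Pr : probability Omega R).

Lemma preimage_indep_event_generated {d} {T : measurableType d} (G : set (set T))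
    (Psi : Omega -> T) (K : set Omega) :
  @measurable _ T = <<s G >> -> setI_closed G ->
  measurable_fun setT Psi -> measurable K ->
  (forall S, G S -> Pr (Psi @^-1` S `&` K) = (Pr (Psi @^-1` S) * Pr K)%E) ->
  forall S, measurable S -> Pr (Psi @^-1` S `&` K) = (Pr (Psi @^-1` S) * Pr K)%E.
Proof.
move=> TG GI mPsi mK indepG S; rewrite {1}TG; move: S.
apply: dynkin_induction => //.
- by rewrite preimage_setT setTI probability_setT mul1e.
- move=> S mS indepS; have mA := measurable_preimage mPsi mS.
  rewrite -preimage_setC probability_setC // (setIC (~` _)) -setDE.
  rewrite measureD ?(le_lt_trans (probability_le1 _ mK)) ?ltry //.
  rewrite [X in (_ - X)%E](_ : _ = Pr (Psi @^-1` S) * Pr K)%E; last first.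
    by rewrite setIC; exact: indepS.
  by rewrite muleBl ?fin_num_measure ?mul1e.
- move=> F mF tF indepF.
  have mPsiF k := measurable_preimage mPsi (mF k).
  have disjPsiF i j : i != j -> Psi @^-1` F i `&` Psi @^-1` F j = set0.
    by move/trivIsetP : tF => /(_ i j I I) Fij /Fij; rewrite -preimage_setI => ->.
  rewrite preimage_bigcup setI_bigcupl measure_bigcup; last 2 first.
  - by move=> k _; exact: measurableI.
  - by apply/trivIsetP => i j _ _ /disjPsiF Fij; rewrite setIACA Fij set0I.
  rewrite measure_bigcup; last 2 first.
  - by move=> k _.
  - by apply/trivIsetP => i j _ _ /disjPsiF.
  transitivity (\sum_(k <oo | k \in setT) (Pr (Psi @^-1` F k) * Pr K))%E.
    by apply: eq_eseriesr => k _; exact: indepF.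
  rewrite -(fineK (fin_num_measure Pr K mK)) [RHS]muleC -nneseriesZl //.
  by apply: eq_eseriesr => i _; rewrite muleC.
Qed.
End independence_extension.

Section seed_chain.
Context {R : realType} {d : measure_display} {Sd : measurableType d}
  {mu : probability Sd R} {dO : measure_display} {Omega : measurableType dO}
  {Pr : probability Omega R} (omega : nat -> Omega -> Sd).
Hypothesis iid : iid_seeds Pr mu omega.

Definition seed_event (J : seq nat) (Bs : nat -> set Sd) : set Omega :=
  \bigcap_(i in [set` J]) (omega i @^-1` Bs i).

Lemma seed_event_nil Bs : seed_event [::] Bs = setT.
Proof. by rewrite /seed_event set_nil bigcap_set0. Qed.

Lemma seed_event_cons_with j J B Bs : j \notin J ->
  seed_event (j :: J) [eta Bs with j |-> B] = omega j @^-1` B `&` seed_event J Bs.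
Proof.
move=> jJ; rewrite /seed_event (_ : [set` j :: J] = j |` [set` J]); last first.
  apply/seteqP; split => i /=; rewrite inE; first by case/orP => [/eqP|]; auto.
  by case=> [->|->]; rewrite ?eqxx ?orbT.
rewrite bigcap_setU1 /= eqxx.
congr (_ `&` _); apply: eq_bigcapr => i /= Ji.
by case: eqP => // ij; rewrite -ij Ji in jJ.
Qed.

Lemma seed_indep_event j J B Bs : uniq J -> j \notin J ->
  measurable B -> (forall i, measurable (Bs i)) ->
  Pr (omega j @^-1` B `&` seed_event J Bs) = (mu B * Pr (seed_event J Bs))%E.
Proof.
move=> uJ jJ mB mBs.
have mBs' i : measurable ([eta Bs with j |-> B] i) by rewrite /=; case: eqP.
rewrite -seed_event_cons_with // /seed_event !iid.2 //= ?jJ // big_cons /= eqxx.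
congr (_ * _)%E; rewrite big_seq_cond [RHS]big_seq_cond.
apply: eq_bigr => i /andP[Ji _].
by case: eqP => // ij; rewrite -ij Ji in jJ.
Qed.

Lemma seed_law j B : measurable B -> Pr (omega j @^-1` B) = mu B.
Proof.
move=> mB; rewrite -[_ @^-1` _]setIT -(seed_event_nil (fun=> set0)).
by rewrite seed_indep_event // seed_event_nil probability_setT mule1.
Qed.

Variables (phi0 : Sd -> R) (g : R * Sd -> R).
Hypotheses (mphi0 : measurable_fun setT phi0) (mg : measurable_fun setT g).

Fixpoint seed_chain n x : R :=
  if n is n'.+1 then g (seed_chain n' x, omega n x) else phi0 (omega 0 x).

Lemma measurable_seed_chain n : measurable_fun setT (seed_chain n).
Proof.
elim: n => [|n IH]; first exact: measurableT_comp mphi0 (iid.1 0).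
exact: measurableT_comp mg (measurable_fun_pair IH (iid.1 n.+1)).
Qed.

Lemma seed_chain_indep n B J Bs :
  measurable B -> (forall i, measurable (Bs i)) -> uniq J -> all [pred j | (n < j)%N] J ->
  Pr (seed_chain n @^-1` B `&` seed_event J Bs) =
  (Pr (seed_chain n @^-1` B) * Pr (seed_event J Bs))%E.
Proof.
elim: n B J Bs => [|n IH] B J Bs mB mBs uJ Jn.
  have J0 : 0 \notin J by apply/negP => /(allP Jn).
  have m0 := measurable_preimage mphi0 mB.
  have -> : seed_chain 0 @^-1` B = omega 0 @^-1` (phi0 @^-1` B) by [].
  by rewrite seed_indep_event // seed_law.
have Jn' : all [pred j | (n < j)%N] J by apply/allP => j /(allP Jn) /ltnW.
have nJ : n.+1 \notin J by apply/negP => /(allP Jn) /=; rewrite ltnn.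
pose Psi x := (seed_chain n x, omega n.+1 x).
have mPsi : measurable_fun setT Psi.
  exact: measurable_fun_pair (measurable_seed_chain n) (iid.1 n.+1).
have mK : measurable (seed_event J Bs).
  by apply: bigcap_measurableType => i _; exact: measurable_preimage (iid.1 i) (mBs i).
have -> : seed_chain n.+1 @^-1` B = Psi @^-1` (g @^-1` B) by [].
apply: (preimage_indep_event_generated Pr _ Psi _
  (@measurable_prod_measurableType _ _ _ _) _ mPsi mK).
- move=> Z1 Z2 [A1 mA1 [A2 mA2 <-]] [B1 mB1 [B2 mB2 <-]].
  rewrite -setXI; exists (A1 `&` B1); first exact: measurableI.
  by exists (A2 `&` B2); first exact: measurableI.
- move=> Z [A1 mA1 [A2 mA2 <-]].
  have -> : Psi @^-1` (A1 `*` A2) = seed_chain n @^-1` A1 `&` omega n.+1 @^-1` A2 by [].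
  have mBs' i : measurable ([eta Bs with n.+1 |-> A2] i) by rewrite /=; case: eqP.
  rewrite -setIA -seed_event_cons_with // IH //= ?nJ ?ltnSn //.
  rewrite seed_event_cons_with // seed_indep_event // muleA.
  rewrite -[omega n.+1 @^-1` A2]setIT -(seed_event_nil Bs) -seed_event_cons_with //.
  rewrite IH //=; last by rewrite ltnSn.
  by rewrite seed_event_cons_with // seed_event_nil setIT seed_law.
- exact: measurable_preimage mg mB.
Qed.

Lemma seed_chain_indep_next n A1 A2 : measurable A1 -> measurable A2 ->
  Pr (seed_chain n @^-1` A1 `&` omega n.+1 @^-1` A2) =
  (Pr (seed_chain n @^-1` A1) * mu A2)%E.
Proof.
move=> mA1 mA2.
rewrite -[omega n.+1 @^-1` A2]setIT -(seed_event_nil (fun=> A2)).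
rewrite -seed_event_cons_with // seed_chain_indep //=; last 2 first.
- by move=> i; case: eqP.
- by rewrite ltnSn.
by rewrite seed_event_cons_with // seed_event_nil setIT seed_law.
Qed.

Lemma ge0_integral_seed_chainS n (f : R -> \bar R) :
  measurable_fun setT f -> (forall c, 0 <= f c)%E ->
  (\int[Pr]_x f (seed_chain n.+1 x) =
   \int[Pr]_x \int[mu]_s f (g (seed_chain n x, s)))%E.
Proof.
move=> mf f0.
pose X : {mfun Omega >-> R} :=
  HB.pack (seed_chain n) (isMeasurableFun.Build _ _ _ _ _ (measurable_seed_chain n)).
have mPsi : measurable_fun setT (fun x => (seed_chain n x, omega n.+1 x)).
  exact: measurable_fun_pair (measurable_seed_chain n) (iid.1 n.+1).
pose Psi : {mfun Omega >-> (R * Sd)%type} :=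
  HB.pack (fun x => (seed_chain n x, omega n.+1 x)) (isMeasurableFun.Build _ _ _ _ _ mPsi).
have mfg : measurable_fun setT (f \o g) by exact: measurableT_comp mf mg.
(* the fresh seed is independent of the chain: the joint law is a product *)
have lawPsi S : measurable S -> ((distribution Pr X \x mu) S = distribution Pr Psi S)%E.
  apply: product_measure_unique => A1 A2 mA1 mA2.
  exact: seed_chain_indep_next.
transitivity (\int[distribution Pr Psi]_p (f \o g) p)%E.
  by rewrite ge0_integral_pushforward // => p _; exact: f0.
transitivity (\int[distribution Pr X \x mu]_p (f \o g) p)%E.
  by apply: eq_measure_integral => S mS _; exact/esym/lawPsi.
have fg0 p : (0 <= (f \o g) p)%E by exact: f0.
rewrite fubini_tonelli1 // ge0_integral_pushforward //.
- exact: measurable_fun_fubini_tonelli_F mfg fg0.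
- by move=> c _; apply: integral_ge0 => s _; exact: f0.
Qed.

Lemma ge0_le_integral_seed_chainS n (f h : R -> \bar R) :
  measurable_fun setT f -> (forall c, 0 <= f c)%E -> measurable_fun setT h ->
  (forall x, \int[mu]_s f (g (seed_chain n x, s)) <= h (seed_chain n x))%E ->
  (\int[Pr]_x f (seed_chain n.+1 x) <= \int[Pr]_x h (seed_chain n x))%E.
Proof.
move=> mf f0 mh fh; rewrite ge0_integral_seed_chainS //.
have mfg : measurable_fun setT (f \o g) by exact: measurableT_comp mf mg.
have fg0 p : (0 <= (f \o g) p)%E by exact: f0.
apply: ge0_le_integral => //.
- by move=> x _; apply: integral_ge0 => s _; exact: f0.
- exact: measurableT_comp (measurable_fun_fubini_tonelli_F _ mfg fg0) (measurable_seed_chain n).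
- exact: measurableT_comp mh (measurable_seed_chain n).
Qed.
End seed_chain.
Arguments measurable_seed_chain {R d Sd mu dO Omega Pr omega} iid {phi0 g}.
Arguments ge0_le_integral_seed_chainS {R d Sd mu dO Omega Pr omega} iid {phi0 g}.

Lemma lee_add_cvg0 {R : realType} (a b : \bar R) (c : R^nat) :
  c @ \oo --> 0 -> (forall n, a <= b + (c n)%:E)%E -> (a <= b)%E.
Proof.
move=> c0 abc; apply/lee_addgt0Pr => e e0.
have [n _ /(_ n (leqnn n)) cn] := cvgr0_norm_lt _ c0 _ e0.
by rewrite (le_trans (abc n)) // leeD2l // lee_fin (le_trans (ler_norm _)) ?ltW.
Qed.

Section nonincreasing_excess.
Context {R : realType} {dO : measure_display} {Omega : measurableType dO}
  (Pr : probability Omega R) (X : nat -> Omega -> R) (l : R).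
Hypotheses (mX : forall n, measurable_fun setT (X n))
  (X_ge : forall n x, l <= X n x)
  (X_noninc : forall x m n, (m <= n)%N -> X n x <= X m x).

Lemma measurable_excess eps n : measurable [set x | eps <= X n x - l].
Proof.
rewrite -[X in measurable X]setTI; apply: measurable_fun_le => //.
exact: measurable_funB.
Qed.

Lemma nonincreasing_excess eps : nonincreasing_seq (fun n => [set x | eps <= X n x - l]).
Proof.
move=> m n mn; apply/subsetPset => x /= /le_trans; apply.
by rewrite lerD2r X_noninc.
Qed.

Lemma cvg_prob_excess eps : Pr (\bigcap_n [set x | eps <= X n x - l]) = 0%E ->
  Pr [set x | eps <= X n x - l] @[n --> \oo] --> 0%E.
Proof.
move=> <-; apply: nonincreasing_cvg_mu.
- by rewrite (le_lt_trans (probability_le1 _ (measurable_excess _ _))) ?ltry.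
- exact: measurable_excess.
- by apply: bigcap_measurableType => n _; exact: measurable_excess.
- exact: nonincreasing_excess.
Qed.

Lemma excess_bigcap_eq0 eps q : 0 < eps -> `|q| < 1 ->
  (forall M n, 0 <= M -> (Pr [set x | (eps <= X n x - l)%R] <=
     Pr [set x | (l + M < X 0 x)%R] + (q ^+ n * M / eps)%:E)%E) ->
  Pr (\bigcap_n [set x | eps <= X n x - l]) = 0%E.
Proof.
move=> e0 q1 tail.
pose T k := [set x | l + k%:R < X 0 x].
have mT k : measurable (T k) by exact: measurable_set_ltr.
have bigcap_le k : (Pr (\bigcap_n [set x | (eps <= X n x - l)%R]) <= Pr (T k))%E.
  apply: (@lee_add_cvg0 _ _ _ (fun n => q ^+ n * (k%:R / eps))).
    by rewrite -(mul0r (k%:R / eps)); apply: cvgMr_tmp; exact: cvg_expr.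
  move=> n; rewrite mulrA; apply: le_trans (tail _ _ (ler0n _ _)).
  apply: le_measure; rewrite ?inE; [|exact: measurable_excess|by move=> x /(_ n I)].
  by apply: bigcap_measurableType => i _; exact: measurable_excess.
have T0 : \bigcap_k T k = set0.
  apply/seteqP; split => // x /= Tx.
  have [k lk] : exists k : nat, X 0 x - l < k%:R.
    exists (Num.truncn `|X 0 x - l|).+1.
    exact: le_lt_trans (ler_norm _) (truncnS_gt _).
  by move: lk; rewrite ltrBlDl => /(lt_trans (Tx k I)); rewrite ltxx.
have cvgT : Pr \o T @ \oo --> 0%E.
  rewrite -(measure0 Pr) -T0; apply: nonincreasing_cvg_mu => //.
  - by rewrite (le_lt_trans (probability_le1 _ (mT 0))) ?ltry.
  - by rewrite T0.
  - move=> m n mn; apply/subsetPset => x /=; apply: le_lt_trans.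
    by rewrite lerD2l ler_nat.
apply/eqP; rewrite eq_le measure_ge0 andbT -(cvg_lim _ cvgT) //.
by apply: lime_ge; [exact: cvgP cvgT | exact: nearW].
Qed.

Lemma ae_cvg_of_excess_bigcap :
  (forall eps, 0 < eps -> Pr (\bigcap_n [set x | eps <= X n x - l]) = 0%E) ->
  {ae Pr, forall x, (fun n => X n x) @ \oo --> l}.
Proof.
move=> excess0.
pose N := \bigcup_k \bigcap_n [set x | k.+1%:R^-1 <= X n x - l].
apply: (@negligibleS _ _ _ _ N); last first.
  apply: negligible_bigcup => k; apply/negligibleP.
    by apply: bigcap_measurableType => n _; exact: measurable_excess.
  by apply: excess0; rewrite invr_gt0 ltr0Sn.
move=> x /= Xx_not_cvg; apply: contrapT => Nx; apply: Xx_not_cvg.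
apply/cvgrPdist_lt => e e0.
have ke : (Num.truncn e^-1).+1%:R^-1 < e.
  by rewrite invf_plt ?posrE // truncnS_gt.
have [n0 Xn0] : exists n0, X n0 x - l < (Num.truncn e^-1).+1%:R^-1.
  apply: contrapT => Xx_far; apply: Nx; exists (Num.truncn e^-1) => // n _ /=.
  by rewrite leNgt; apply/negP => Xn; apply: Xx_far; exists n.
near=> n; rewrite distrC ger0_norm ?subr_ge0 //.
apply: le_lt_trans (lt_trans Xn0 ke); rewrite lerD2r X_noninc //.
by near: n; exact: nbhs_infty_ge.
Unshelve. all: by end_near.
Qed.
End nonincreasing_excess.

Section planning.
Context {R : realType} {X : normedModType R} {U : Type}
  {P : planning_problem X U} {Cstar : R}
  {d : measure_display} {Sd : measurableType d} {mu : probability Sd R}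
  {A : \bar R -> Sd -> traj X U} {w : R}
  {dO : measure_display} {Omega : measurableType dO} {Pr : probability Omega R}
  {omega : nat -> Omega -> Sd}.
Hypotheses (opt : optimal_cost_attained P Cstar) (wb : well_behaved P Cstar mu A w)
  (mcost : measurable_fun setT (fun p : \bar R * Sd => cost P (A p.1 p.2)))
  (iid : iid_seeds Pr mu omega).

Lemma Cstar_le_planner_cost (c : \bar R) s : (Cstar%:E <= c)%E -> Cstar <= cost P (A c s).
Proof.
case: wb => _ solves _ /solves /(_ s) [feas _].
by case: opt => _; apply.
Qed.

Lemma planner_cost_le (c : R) s : Cstar <= c -> cost P (A c%:E s) <= c.
Proof. by case: wb => _ solves _; rewrite -lee_fin => /solves /(_ s) []. Qed.

Lemma w_le1 : w <= 1.
Proof.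
case: wb => _ _ /(_ (Cstar + 1)).
rewrite lerDl ler01 addrAC subrr add0r mulr1 => /(_ isT) le1w.
rewrite -subr_ge0 -lee_fin (le_trans _ le1w) //.
apply: integral_ge0 => s _.
by rewrite lee_fin subr_ge0 Cstar_le_planner_cost // lee_fin lerDl.
Qed.

Lemma norm_1Bw_lt1 : `|1 - w| < 1.
Proof.
have w_gt0 : 0 < w by case: wb.
by rewrite ger0_norm ?subr_ge0 ?w_le1 // ltrBlDr ltrDl.
Qed.

Let first_cost (s : Sd) : R := cost P (A +oo%E s).
Let next_cost (p : R * Sd) : R := cost P (A p.1%:E p.2).

Lemma measurable_first_cost : measurable_fun setT first_cost.
Proof.
rewrite (_ : first_cost =
  (fun p : \bar R * Sd => cost P (A p.1 p.2)) \o (fun s => (+oo%E, s))) //.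
apply: measurableT_comp mcost _.
by apply: measurable_fun_pair; [exact: measurable_cst | exact: measurable_id].
Qed.

Lemma measurable_next_cost : measurable_fun setT next_cost.
Proof.
rewrite (_ : next_cost =
  (fun p : \bar R * Sd => cost P (A p.1 p.2)) \o (fun p => (p.1%:E, p.2))) //.
apply: measurableT_comp mcost _.
apply: measurable_fun_pair; last exact: measurable_snd.
by apply/measurable_EFinP; exact: measurable_fst.
Qed.

Lemma cost_asymp_opt_chain n x :
  cost P (asymp_opt P A omega n x) = seed_chain omega first_cost next_cost n x.
Proof. by elim: n => [|n IH] //; rewrite [RHS]/= -IH. Qed.

Lemma measurable_cost_asymp_opt n :
  measurable_fun setT (fun x => cost P (asymp_opt P A omega n x)).
Proof.
rewrite (_ : (fun x => _) = seed_chain omega first_cost next_cost n).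
  exact: (measurable_seed_chain iid measurable_first_cost measurable_next_cost n).
by apply/funext => x; rewrite cost_asymp_opt_chain.
Qed.

Lemma Cstar_le_cost_asymp_opt n x : Cstar <= cost P (asymp_opt P A omega n x).
Proof.
elim: n => [|n IH]; apply: Cstar_le_planner_cost; [exact: leey | by rewrite lee_fin].
Qed.

Lemma cost_asymp_opt_nonincreasing x m n : (m <= n)%N ->
  cost P (asymp_opt P A omega n x) <= cost P (asymp_opt P A omega m x).
Proof.
elim: n => [|n IH]; first by rewrite leqn0 => /eqP ->.
rewrite leq_eqVlt => /orP[/eqP -> //|]; rewrite ltnS => /IH.
by apply: le_trans; apply: planner_cost_le; exact: Cstar_le_cost_asymp_opt.
Qed.

(* c_0 may have infinite mean; truncating it at Cstar + M makes the chain
   integrable without changing it on the event {c_0 <= Cstar + M}. *)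
Let truncated_first_cost (M : R) (s : Sd) : R := Num.min (first_cost s) (Cstar + M).

Lemma measurable_truncated_first_cost M : measurable_fun setT (truncated_first_cost M).
Proof. by apply: measurable_minr measurable_first_cost _; exact: measurable_cst. Qed.

Let truncated_cost_chain (M : R) : nat -> Omega -> R :=
  seed_chain omega (truncated_first_cost M) next_cost.

Lemma measurable_truncated_cost_chain M n :
  measurable_fun setT (truncated_cost_chain M n).
Proof.
exact: (measurable_seed_chain iid (measurable_truncated_first_cost M) measurable_next_cost n).
Qed.

Lemma Cstar_le_truncated_cost_chain M n x : 0 <= M ->
  Cstar <= truncated_cost_chain M n x.
Proof.
move=> M0; elim: n => [|n IH]; last by apply: Cstar_le_planner_cost; rewrite lee_fin.
by rewrite [X in _ <= X]/= le_min lerDl M0 Cstar_le_planner_cost ?leey.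
Qed.

Lemma truncated_cost_chainE M n x : first_cost (omega 0 x) <= Cstar + M ->
  truncated_cost_chain M n x = cost P (asymp_opt P A omega n x).
Proof.
move=> c0; rewrite cost_asymp_opt_chain.
by elim: n => [|n IH]; [exact: min_l | rewrite [LHS]/= IH].
Qed.

Lemma truncated_excess_expectation_le M n : 0 <= M ->
  (\int[Pr]_x (truncated_cost_chain M n x - Cstar)%:E <= ((1 - w) ^+ n * M)%:E)%E.
Proof.
move=> M0; have trunc_ge k x := Cstar_le_truncated_cost_chain M k x M0.
have mtrunc k : measurable_fun setT (fun x => (truncated_cost_chain M k x - Cstar)%:E).
  by apply/measurable_EFinP/measurable_funB => //; exact: measurable_truncated_cost_chain.
elim: n => [|n IH].
  rewrite expr0 mul1r -[M%:E]mule1 -(probability_setT Pr) -integral_cst //.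
  apply: ge0_le_integral => //; first by move=> x _; rewrite lee_fin subr_ge0.
  by move=> x _; rewrite lee_fin lerBlDl /truncated_cost_chain /= ge_min lexx orbT.
(* nonnegative everywhere, as Tonelli requires, and equal to c - Cstar on the chain *)
pose excess c := (Num.max c Cstar - Cstar)%:E.
have mexcess : measurable_fun setT excess.
  apply/measurable_EFinP/measurable_funB => //.
  by apply: measurable_maxr => //; exact: measurable_cst.
rewrite (eq_integral (excess \o truncated_cost_chain M n.+1)); last first.
  by move=> x _; rewrite /comp /excess max_l ?trunc_ge.
apply: le_trans (ge0_le_integral_seed_chainS iid (measurable_truncated_first_cost M)
  measurable_next_cost n _
  (fun c => ((1 - w) * (c - Cstar))%:E) mexcess _ _ _) _.
- by move=> c; rewrite lee_fin subr_ge0 le_max lexx orbT.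
- apply/measurable_EFinP/measurable_funM => //.
  by apply: measurable_funB => //; exact: measurable_cst.
- move=> x; set c := seed_chain _ _ _ n x.
  have c_ge : Cstar <= c by exact: trunc_ge n x.
  rewrite (eq_integral (fun s => (cost P (A c%:E s) - Cstar)%:E)); last first.
    by move=> s _; rewrite /excess max_l ?Cstar_le_planner_cost ?lee_fin.
  by case: wb => _ _; apply.
under eq_integral do rewrite EFinM.
have w1 : 0 <= 1 - w by rewrite subr_ge0 w_le1.
rewrite (ge0_integralZl_EFin _ _ _ (mtrunc n) w1) //; last first.
  by move=> x _; rewrite lee_fin subr_ge0.
by rewrite exprS -mulrA EFinM lee_wpmul2l ?lee_fin.
Qed.

Lemma truncated_excess_prob_le eps M n : 0 < eps -> 0 <= M ->
  (Pr [set x | (eps <= truncated_cost_chain M n x - Cstar)%R] <=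
   ((1 - w) ^+ n * M / eps)%:E)%E.
Proof.
move=> e0 M0; rewrite EFinM lee_pdivlMr // muleC.
apply: (le_trans _ (truncated_excess_expectation_le M n M0)).
have mY : measurable_fun setT (fun x => truncated_cost_chain M n x - Cstar).
  by apply: measurable_funB => //; exact: measurable_truncated_cost_chain.
pose Y : {RV Pr >-> R} := HB.pack (fun x => truncated_cost_chain M n x - Cstar)
  (isMeasurableFun.Build _ _ _ _ _ mY).
have := @markov _ _ _ Pr Y id eps e0 (@measurable_id _ _ setT)
  (fun r r0 => r0) (fun r s _ _ rs => rs).
rewrite unlock /=.
have Y_ge x : `|truncated_cost_chain M n x - Cstar| = truncated_cost_chain M n x - Cstar.
  by rewrite ger0_norm // subr_ge0 Cstar_le_truncated_cost_chain.
rewrite (_ : [set x | _] = [set x | (eps <= truncated_cost_chain M n x - Cstar)%R]).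
  by under eq_integral do rewrite Y_ge.
by apply/seteqP; split => x /=; rewrite lee_fin Y_ge.
Qed.

Lemma asymp_opt_excess_prob_le eps M n : 0 < eps -> 0 <= M ->
  (Pr [set x | (eps <= cost P (asymp_opt P A omega n x) - Cstar)%R] <=
   Pr [set x | (Cstar + M < cost P (asymp_opt P A omega 0 x))%R] +
   ((1 - w) ^+ n * M / eps)%:E)%E.
Proof.
move=> e0 M0.
have mT : measurable [set x | Cstar + M < cost P (asymp_opt P A omega 0 x)].
  by apply: measurable_set_ltr => //; exact: measurable_cost_asymp_opt.
have mS := measurable_excess _ Cstar (measurable_truncated_cost_chain M) eps n.
apply: le_trans (le_measure _ _ _ _) _; rewrite ?inE.
- exact: measurable_excess _ _ measurable_cost_asymp_opt _ _.
- exact: measurableU mT mS.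
- move=> x /= excess_x; case: (ltP (Cstar + M) (first_cost (omega 0 x))) => [|c0].
    by left.
  by right; rewrite truncated_cost_chainE.
apply: le_trans (measureU2 _ mT mS) _.
by rewrite leeD2l // truncated_excess_prob_le.
Qed.

End planning.

Theorem theorem3 (R : realType) (X : normedModType R) (U : Type)
  (P : planning_problem X U) (Cstar : R)
  (d : measure_display) (Sd : measurableType d) (mu : probability Sd R)
  (A : \bar R -> Sd -> traj X U) (w : R)
  (dO : measure_display) (Omega : measurableType dO) (Pr : probability Omega R)
  (omega : nat -> Omega -> Sd) :
  optimal_cost_attained P Cstar ->
  well_behaved P Cstar mu A w ->
  measurable_fun setT (fun p : \bar R * Sd => cost P (A p.1 p.2)) ->
  iid_seeds Pr mu omega ->
  (forall eps : R, 0 < eps ->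
     (fun n => Pr [set x | eps <= cost P (asymp_opt P A omega n x) - Cstar])
       @ \oo --> 0%E) /\
  {ae Pr, forall x, (fun n => cost P (asymp_opt P A omega n x)) @ \oo --> Cstar}.
Proof.
move=> opt wb mcost iid.
pose c n x := cost P (asymp_opt P A omega n x).
have mc : forall n, measurable_fun setT (c n) := measurable_cost_asymp_opt mcost iid.
have c_noninc : forall x m n, (m <= n)%N -> c n x <= c m x.
  exact: cost_asymp_opt_nonincreasing opt wb.
have excess0 eps : 0 < eps -> Pr (\bigcap_n [set x | eps <= c n x - Cstar]) = 0%E.
  move=> e0; apply: (excess_bigcap_eq0 _ _ _ mc _ _ e0 (norm_1Bw_lt1 opt wb)) => M n M0.
  exact: (asymp_opt_excess_prob_le opt wb mcost iid eps M n e0 M0).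
split => [eps e0|]; first exact: cvg_prob_excess mc c_noninc _ (excess0 eps e0).
exact: ae_cvg_of_excess_bigcap mc (Cstar_le_cost_asymp_opt opt wb) c_noninc excess0.
Qed.
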